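(* Let $\mathcal{H}$ be a separable Hilbert space with a fixed orthonormal basis $\mathcal{B}$, and let $\mathcal{S}$ be a closed subspace of $\mathcal{H}$ such that $\sup_{D\in\mathcal{D}^+}\|P_{D,\mathcal{S}}\|<\infty$. Then for every projection $Q\in\mathcal{P}(\mathcal{D})$ the pair $(Q,\mathcal{S})$ is compatible (so $P_{Q,\mathcal{S}}$ is well defined).
   Context: $\mathcal{D}$ is the algebra of bounded operators diagonal with respect to $\mathcal{B}$; $\mathcal{D}^+$ its positive invertible elements; $\mathcal{P}(\mathcal{D})$ its orthogonal projections. For positive bounded $D$ and closed $\mathcal{S}$, $(D,\mathcal{S})$ is compatible if there exists a bounded idempotent $Q'$ with range $\mathcal{S}$ and $DQ'=Q'^*D$; writing $D=\begin{pmatrix} a & b\\ b^* & c\end{pmatrix}$ with respect to $\mathcal{S}\oplus\mathcal{S}^\perp$, this holds iff $R(b)\subseteq R(a)$, and then $P_{D,\mathcal{S}}:=\begin{pmatrix} 1 & d\\ 0&0\end{pmatrix}$ with $d:\mathcal{S}^\perp\to\mathcal{S}$ the unique bounded operator with $ad=b$ and $R(d)\subseteq\overline{R(a)}$. For invertible $D$ every pair is compatible. *)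

From HB Require Import structures.
From mathcomp Require Import all_boot all_order all_algebra.
From mathcomp Require Import all_classical all_reals.
From mathcomp Require Import topology normedtype sequences.
From mathcomp Require Import complex.
Set Implicit Arguments. Unset Strict Implicit. Unset Printing Implicit Defensive.
Import Order.TTheory GRing.Theory Num.Theory.
Import numFieldNormedType.Exports.
Local Open Scope classical_set_scope.
Local Open Scope ring_scope.

(* Model: H = the closed subspace of l^2(N; C) of sequences supported on the
   index set I_N = {k | k < N} (N = None: all of N, i.e. infinite dimensional),
   with the fixed orthonormal basis B = (e_k)_{k in I_N} (standard basis). *)

Section Hilbert.
Variable R : realType.
Local Notation C := R[i].
Local Notation seqC := (nat -> C).

Definition sqnC (z : C) : R := complex.Re z ^+ 2 + complex.Im z ^+ 2.

Definition in_index (N : option nat) (k : nat) : Prop :=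
  if N is Some n then (k < n)%N else True.

Definition inH (N : option nat) (x : seqC) : Prop :=
  (forall k, ~ in_index N k -> x k = 0) /\
  cvgn (series (fun k => sqnC (x k))).

Definition hnorm (x : seqC) : R :=
  Num.sqrt (limn (series (fun k => sqnC (x k)))).

Definition ip (x y : seqC) : C :=
  Complex (limn (series (fun k => complex.Re (x k * conjc (y k)))))
          (limn (series (fun k => complex.Im (x k * conjc (y k))))).

Definition subs (x y : seqC) : seqC := fun k => x k - y k.
Definition zeros : seqC := fun _ => 0.

(* bounded (linear) operators on H; only their action on H matters *)
Definition bounded_op (N : option nat) (T : seqC -> seqC) : Prop :=
  (forall x, inH N x -> inH N (T x)) /\
  (forall (a : C) x y, inH N x -> inH N y ->
      T (fun k => a * x k + y k) = (fun k => a * T x k + T y k)) /\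
  (exists M : R, forall x, inH N x -> hnorm (T x) <= M * hnorm x).

Definition opnorm_le (N : option nat) (T : seqC -> seqC) (M : R) : Prop :=
  forall x, inH N x -> hnorm (T x) <= M * hnorm x.

Definition closed_subspace (N : option nat) (S : set seqC) : Prop :=
  (forall x, S x -> inH N x) /\ S zeros /\
  (forall (a : C) x y, S x -> S y -> S (fun k => a * x k + y k)) /\
  (forall (u : nat -> seqC) x, (forall n, S (u n)) -> inH N x ->
      (fun n => hnorm (subs (u n) x)) @ \oo --> (0 : R) -> S x).

Definition in_ortho (N : option nat) (S : set seqC) (y : seqC) : Prop :=
  inH N y /\ forall s, S s -> ip y s = 0.

Definition is_orth_proj (S : set seqC) (x p : seqC) : Prop :=
  S p /\ forall s, S s -> ip (subs x p) s = 0.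

Definition in_closure (A : set seqC) (z : seqC) : Prop :=
  forall e : R, 0 < e -> exists w, A w /\ hnorm (subs z w) < e.

Definition diag (d : nat -> C) (x : seqC) : seqC := fun k => d k * x k.

(* D^+ : positive invertible diagonal operators, D = diag(d) with
   c <= d_k <= M (c > 0) on the index set *)
Definition Dplus (N : option nat) (d : nat -> R) : Prop :=
  exists c M : R, 0 < c /\ forall k, in_index N k -> c <= d k <= M.

Definition diagR (d : nat -> R) : seqC -> seqC :=
  diag (fun k => Complex (d k) 0).

(* P(D) : orthogonal projections in D, i.e. diag(q) with q_k in {0,1} *)
Definition diagP (q : nat -> bool) : seqC -> seqC :=
  diag (fun k => if q k then 1 else 0).

(* (A, S) compatible: exists a bounded idempotent Q' with range S and
   A Q' = Q'^* A  (i.e. <A Q' x, y> = <A x, Q' y> for all x, y in H) *)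
Definition compatible (N : option nat) (A : seqC -> seqC) (S : set seqC) : Prop :=
  exists Q' : seqC -> seqC,
    bounded_op N Q' /\
    (forall x, inH N x -> Q' (Q' x) = Q' x) /\
    (forall z, S z <-> exists x, inH N x /\ z = Q' x) /\
    (forall x y, inH N x -> inH N y -> ip (A (Q' x)) y = ip (A x) (Q' y)).

(* P = P_{A,S}: with respect to H = S (+) S^perp, P = [[1, d], [0, 0]]
   where d : S^perp -> S satisfies a d = b (a = P_S A|_S, b = P_S A|_{S^perp})
   and R(d) is contained in the closure of R(a). *)
Definition is_PAS (N : option nat) (A : seqC -> seqC) (S : set seqC)
    (P : seqC -> seqC) : Prop :=
  bounded_op N P /\
  (forall x, inH N x -> S (P x)) /\
  (forall s, S s -> P s = s) /\
  (forall y, in_ortho N S y -> forall s, S s -> ip (A (P y)) s = ip (A y) s) /\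
  (forall y, in_ortho N S y ->
     in_closure (fun z => exists s, S s /\ is_orth_proj S (A s) z) (P y)).

End Hilbert.

From HB Require Import structures.
From mathcomp Require Import all_boot all_order all_algebra.
From mathcomp Require Import all_classical all_reals.
From mathcomp Require Import topology normedtype sequences.
From mathcomp Require Import complex.
From mathcomp Require Import ring lra.
Import Order.TTheory GRing.Theory Num.Theory.
Import numFieldNormedType.Exports.
Local Open Scope classical_set_scope.
Local Open Scope ring_scope.

(* For a diagonal weight d bounded above and away from 0, P_{D,S} is the
   projection onto S that is orthogonal for the weighted inner product
   <D x, y>; it exists by minimising the weighted distance to S (parallelogram
   law and completeness of l^2).
   Given Q = diag(q), take the weights w_n equal to 1 on q and 1/(n+1) off q,
   and P_n = P_{w_n,S}.  Comparing the orthogonality relations of P_n and P_m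
   shows that the off-q energies A_n = <(1 - Q)(x - P_n x), x - P_n x>
   increase with n and that |P_m x - P_n x|^2 <= A_m - A_n + A_m / (n + 1).
   The uniform bound on ||P_n|| bounds A_n, so P_n x converges.  The limit Q'
   is a bounded idempotent with range S, and letting n -> oo in
   <w_n P_n x, y> = <w_n x, P_n y> kills the off-q part and leaves
   <Q Q' x, y> = <Q x, Q' y>. *)

Section RealSeries.
Context {R : realType}.
Implicit Types f g : nat -> R.

Definition summable f := cvgn (series f).
Definition ssum f := limn (series f).

Lemma eq_summable f g : f =1 g -> summable f -> summable g.
Proof. by move=> /funext ->. Qed.

Lemma eq_ssum f g : f =1 g -> ssum f = ssum g.
Proof. by move=> /funext ->. Qed.

Lemma summableD f g : summable f -> summable g -> summable (fun k => f k + g k).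
Proof. by move=> hf hg; exact: (is_cvg_seriesD hf hg). Qed.

Lemma ssumD f g : summable f -> summable g ->
  ssum (fun k => f k + g k) = ssum f + ssum g.
Proof. by move=> hf hg; exact: (lim_seriesD hf hg). Qed.

Lemma summableZ r f : summable f -> summable (fun k => r * f k).
Proof. by move=> hf; exact: (@is_cvg_seriesZ R f r hf). Qed.

Lemma ssumZ r f : summable f -> ssum (fun k => r * f k) = r * ssum f.
Proof. by move=> hf; exact: (@lim_seriesZ R f r hf). Qed.

Lemma summableN f : summable f -> summable (fun k => - f k).
Proof. by rewrite /summable is_cvg_seriesN. Qed.

Lemma ssumN f : summable f -> ssum (fun k => - f k) = - ssum f.
Proof. by move=> hf; exact: (lim_seriesN hf). Qed.

Lemma summableB f g : summable f -> summable g -> summable (fun k => f k - g k).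
Proof. by move=> hf hg; exact: (is_cvg_seriesB hf hg). Qed.

Lemma ssumB f g : summable f -> summable g ->
  ssum (fun k => f k - g k) = ssum f - ssum g.
Proof. by move=> hf hg; exact: (lim_seriesB hf hg). Qed.

Lemma ssum_lincomb2 (a b : R) f g : summable f -> summable g ->
  ssum (fun k => a * f k + b * g k) = a * ssum f + b * ssum g.
Proof.
by move=> hf hg; rewrite ssumD; [rewrite !ssumZ | exact: summableZ | exact: summableZ].
Qed.

Lemma ssum_lincomb3 (a b c : R) f g h : summable f -> summable g -> summable h ->
  ssum (fun k => a * f k + b * g k + c * h k) = a * ssum f + b * ssum g + c * ssum h.
Proof.
move=> hf hg hh; rewrite ssumD; last exact: summableZ.
  by rewrite ssum_lincomb2 // ssumZ.
by apply: summableD; exact: summableZ.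
Qed.

Lemma series_cst0 : series (fun=> 0 : R) = fun=> 0.
Proof. by apply/funext => n; rewrite /series /= big1. Qed.

Lemma summable0 : summable (fun=> 0).
Proof. by rewrite /summable series_cst0; exact: is_cvg_cst. Qed.

Lemma ssum0 : ssum (fun=> 0) = 0.
Proof. by rewrite /ssum series_cst0; exact: lim_cst. Qed.

Lemma ssum_le f g : summable f -> summable g -> (forall k, f k <= g k) ->
  ssum f <= ssum g.
Proof. exact: lim_series_le. Qed.

Lemma ssum_ge0 f : summable f -> (forall k, 0 <= f k) -> 0 <= ssum f.
Proof. by move=> hf h; rewrite -ssum0; exact: ssum_le summable0 hf h. Qed.

Lemma summable_le f g : (forall k, `|f k| <= g k) -> summable g -> summable f.
Proof.
move=> h hg.
have hfg : summable (fun k => f k + g k).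
  apply: (@series_le_cvg R _ (fun k => 2 * g k)).
  - by move=> k; have := h k; rewrite ler_norml; lra.
  - by move=> k; have := h k; have := normr_ge0 (f k); lra.
  - by move=> k; have := h k; rewrite ler_norml; lra.
  - exact: summableZ.
by have := summableB _ _ hfg hg; apply: eq_summable => k /=; lra.
Qed.

Lemma ler_norm_ssum f g : (forall k, `|f k| <= g k) -> summable g ->
  `|ssum f| <= ssum g.
Proof.
move=> h hg; have hf := summable_le _ _ h hg.
rewrite ler_norml -ssumN //; apply/andP; split; apply: ssum_le => //;
  try exact: summableN.
all: by move=> k; have := h k; rewrite ler_norml => /andP[].
Qed.

Lemma series_le_ssum f n : summable f -> (forall k, 0 <= f k) -> series f n <= ssum f.
Proof. by move=> hf h; apply: nondecreasing_cvgn_le => //; exact: nondecreasing_series. Qed.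

Lemma le_ssum f k : summable f -> (forall k, 0 <= f k) -> f k <= ssum f.
Proof.
move=> hf h; apply: le_trans (series_le_ssum _ k.+1 hf h).
rewrite /series /= big_nat_recr //= lerDr.
by apply: sumr_ge0 => i _.
Qed.

Lemma ssum_eq0 f : summable f -> (forall k, 0 <= f k) -> ssum f = 0 -> forall k, f k = 0.
Proof. by move=> hf h e k; apply/eqP; rewrite eq_le h andbT -e le_ssum. Qed.

Lemma cvg_series_ptwise (a : nat -> nat -> R) (l : nat -> R) n :
  (forall k, (fun m => a m k) @ \oo --> l k) ->
  (fun m => series (a m) n) @ \oo --> series l n.
Proof.
move=> h; elim: n => [|n IH].
  by rewrite /series /= big_geq //; under eq_cvg do rewrite big_geq //; exact: cvg_cst.
by rewrite seriesSr; under eq_cvg do rewrite seriesSr; exact: cvgD.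
Qed.

Lemma summable_bounded f B : (forall k, 0 <= f k) -> (forall n, series f n <= B) ->
  summable f /\ ssum f <= B.
Proof.
move=> h hB.
have hf : summable f.
  apply: nondecreasing_is_cvgn; first exact: nondecreasing_series.
  by exists B => _ [n _ <-].
by split => //; apply: limr_le => //; exact: nearW.
Qed.

Lemma harmonic_eventually_le (e : R) : 0 < e ->
  exists M, forall n, (M <= n)%N -> harmonic n <= e.
Proof.
move=> he; have /cvgrPdist_le /(_ e he) [M _ hM] := @cvg_harmonic R.
by exists M => n /hM; rewrite sub0r normrN ger0_norm // harmonic_ge0.
Qed.

Lemma harmonic_le1 n : harmonic n <= 1 :> R.
Proof. by rewrite /= invf_le1 ?ltr0n // ler1n. Qed.

Lemma harmonic_ltn n m : (n < m)%N -> harmonic m < harmonic n :> R.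
Proof. by move=> nm; rewrite /= ltf_pV2 ?posrE ?ltr0n // ltr_nat ltnS. Qed.

End RealSeries.

Section ComplexDot.
Context {R : realType}.
Local Notation C := R[i].
Implicit Types a b c : C.

Definition rdot a b : R := complex.Re a * complex.Re b + complex.Im a * complex.Im b.

Lemma rdotC a b : rdot a b = rdot b a.
Proof. by rewrite /rdot mulrC [complex.Im a * _]mulrC. Qed.

Lemma rdotDl a b c : rdot (a + b) c = rdot a c + rdot b c.
Proof. by case: a => ? ?; case: b => ? ?; case: c => ? ?; rewrite /rdot /=; ring. Qed.

Lemma rdotNl a b : rdot (- a) b = - rdot a b.
Proof. by case: a => ? ?; case: b => ? ?; rewrite /rdot /=; ring. Qed.

Lemma rdotMl a b c :
  rdot (a * b) c = complex.Re a * rdot b c - complex.Im a * rdot b ('i%C * c).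
Proof. by case: a => ? ?; case: b => ? ?; case: c => ? ?; simpc; rewrite /rdot /=; ring. Qed.

Lemma rdotRl (r : R) b c : rdot (Complex r 0 * b) c = r * rdot b c.
Proof. by case: b => ? ?; case: c => ? ?; simpc; rewrite /rdot /=; ring. Qed.

Lemma Re_mulconj a b : complex.Re (a * conjc b) = rdot a b.
Proof. by case: a => ? ?; case: b => ? ?; simpc; rewrite /rdot /=; ring. Qed.

Lemma Im_mulconj a b : complex.Im (a * conjc b) = rdot a ('i%C * b).
Proof. by case: a => ? ?; case: b => ? ?; simpc; rewrite /rdot /=; ring. Qed.

Lemma sqnC_rdot a : sqnC a = rdot a a.
Proof. by rewrite /sqnC /rdot !expr2. Qed.

Lemma rdot_subE a b : rdot (a - b) (a - b) =
  (complex.Re a - complex.Re b) ^+ 2 + (complex.Im a - complex.Im b) ^+ 2.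
Proof. by case: a => ? ?; case: b => ? ?; rewrite /rdot /=; ring. Qed.

Lemma rdot_ge0 a : 0 <= rdot a a.
Proof. by rewrite /rdot; nra. Qed.

Lemma rdot_eq0 a : rdot a a = 0 -> a = 0.
Proof.
case: a => x y; rewrite /rdot /= => h.
have /eqP : x * x = 0 by nra.
have /eqP : y * y = 0 by nra.
by rewrite !mulf_eq0 !orbb => /eqP -> /eqP ->.
Qed.

Lemma rdotMM a b : rdot (a * b) (a * b) = rdot a a * rdot b b.
Proof. by case: a => ? ?; case: b => ? ?; simpc; rewrite /rdot /=; ring. Qed.

Lemma rdot_cross e a b : 0 < e -> 2 * `|rdot a b| <= e * rdot a a + e^-1 * rdot b b.
Proof.
case: a => x y; case: b => u v; rewrite /rdot /= => he.
have ee : e * e^-1 = 1 by rewrite mulfV ?gt_eqF.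
have hi : 0 < e^-1 by rewrite invr_gt0.
(* For s = 1 or -1: e |a|^2 + |b|^2 / e - 2 s <a, b> = |e a - s b|^2 / e. *)
have key (s : R) : s ^+ 2 = 1 ->
    e * (x * x + y * y) + e^-1 * (u * u + v * v) - 2 * s * (x * u + y * v) =
    e^-1 * ((e * x - s * u) ^+ 2 + (e * y - s * v) ^+ 2).
  move=> s2; apply/eqP; rewrite -subr_eq0; apply/eqP.
  transitivity ((1 - e * e^-1) * (e * (x * x + y * y) - 2 * s * (x * u + y * v))
                 + (1 - s ^+ 2) * e^-1 * (u * u + v * v)).
    by ring.
  by rewrite ee s2 !subrr !mul0r addr0.
have pos (s : R) : 0 <= e^-1 * ((e * x - s * u) ^+ 2 + (e * y - s * v) ^+ 2).
  by apply: mulr_ge0; [exact: ltW | apply: addr_ge0; exact: sqr_ge0].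
have k1 := key 1 (expr1n _ _).
have k2 := key (-1) (etrans (sqrrN 1) (expr1n _ _)).
have p1 := pos 1; have p2 := pos (-1).
case: (lerP 0 (x * u + y * v)) => h; [rewrite ger0_norm // | rewrite ltr0_norm //]; lra.
Qed.

Lemma rdot_lin_le a b c :
  rdot (a * b + c) (a * b + c) <= 2 * rdot a a * rdot b b + 2 * rdot c c.
Proof.
case: a => a1 a2; case: b => x1 x2; case: c => y1 y2; simpc; rewrite /rdot /=.
have h1 : 0 <= (a1 * x1 - a2 * x2 - y1) ^+ 2 by exact: sqr_ge0.
have h2 : 0 <= (a1 * x2 + a2 * x1 - y2) ^+ 2 by exact: sqr_ge0.
nra.
Qed.

End ComplexDot.

Section SquareSummable.
Context {R : realType}.
Local Notation C := R[i].
Local Notation seqC := (nat -> C).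
Implicit Types (x y z : seqC) (w : nat -> R).

Definition l2 x := summable (fun k => rdot (x k) (x k)).
Definition sqnorm x := ssum (fun k => rdot (x k) (x k)).
Definition lin (a : C) x y : seqC := fun k => a * x k + y k.
Definition mulI x : seqC := fun k => 'i%C * x k.

Lemma inH_l2 {N x} : inH N x -> l2 x.
Proof. by case=> _; apply: eq_summable => k; rewrite sqnC_rdot. Qed.

Lemma l2_inH N x : (forall k, ~ in_index N k -> x k = 0) -> l2 x -> inH N x.
Proof. by move=> hs hx; split => //; apply: eq_summable hx => k; rewrite sqnC_rdot. Qed.

Lemma hnormE x : hnorm x = Num.sqrt (sqnorm x).
Proof. by rewrite /hnorm; congr (Num.sqrt (limn (series _))); apply/funext => k; rewrite sqnC_rdot. Qed.

Lemma sqnorm_ge0 {x} : l2 x -> 0 <= sqnorm x.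
Proof. by move=> hx; apply: ssum_ge0 => // k; exact: rdot_ge0. Qed.

Lemma rdot_le_sqnorm x k : l2 x -> rdot (x k) (x k) <= sqnorm x.
Proof. by move=> hx; apply: le_ssum => // j; exact: rdot_ge0. Qed.

Lemma sqnorm_eq0 {x} : l2 x -> sqnorm x = 0 -> x = zeros R.
Proof.
move=> hx x0; apply/funext => k; apply: rdot_eq0.
by apply: (ssum_eq0 _ hx) => // j; exact: rdot_ge0.
Qed.

Lemma l2_mul (c : nat -> C) (K : R) x : (forall k, rdot (c k) (c k) <= K) -> l2 x ->
  l2 (fun k => c k * x k).
Proof.
move=> hc hx; apply: (summable_le _ (fun k => K * rdot (x k) (x k))); last first.
  exact: summableZ.
move=> k; rewrite ger0_norm ?rdot_ge0 // rdotMM.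
by apply: ler_wpM2r; [exact: rdot_ge0 | exact: hc].
Qed.

Lemma l2_lin a {x y} : l2 x -> l2 y -> l2 (lin a x y).
Proof.
move=> hx hy.
apply: (summable_le _ (fun k => 2 * rdot a a * rdot (x k) (x k) + 2 * rdot (y k) (y k))).
  by move=> k; rewrite ger0_norm ?rdot_ge0 //; exact: rdot_lin_le.
by apply: summableD; exact: summableZ.
Qed.

Lemma lin_subs x y : lin (-1) y x = subs x y.
Proof. by apply/funext => k; rewrite /lin /subs mulN1r addrC. Qed.

Lemma lin_mulI x : lin 'i%C x (zeros R) = mulI x.
Proof. by apply/funext => k; rewrite /lin /mulI /zeros addr0. Qed.

Lemma l2_zeros : l2 (zeros R).
Proof. by apply: eq_summable summable0 => k; rewrite /rdot /=; ring. Qed.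

Lemma l2_subs {x y} : l2 x -> l2 y -> l2 (subs x y).
Proof. by move=> hx hy; rewrite -lin_subs; exact: l2_lin. Qed.

Lemma l2_mulI {x} : l2 x -> l2 (mulI x).
Proof. by move=> hx; rewrite -lin_mulI; apply: l2_lin l2_zeros. Qed.

Lemma inH_lin {N} a {x y} : inH N x -> inH N y -> inH N (lin a x y).
Proof.
move=> hx hy; apply: l2_inH; last exact: l2_lin (inH_l2 hx) (inH_l2 hy).
by move=> k hk; rewrite /lin hx.1 // hy.1 // mulr0 addr0.
Qed.

Lemma sqnorm_lin_le a {x y} : l2 x -> l2 y ->
  sqnorm (lin a x y) <= 2 * rdot a a * sqnorm x + 2 * sqnorm y.
Proof.
move=> hx hy; rewrite -!ssumZ // -ssumD; try exact: summableZ.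
apply: ssum_le; [exact: l2_lin | by apply: summableD; exact: summableZ |].
by move=> k; exact: rdot_lin_le.
Qed.

Lemma sqnorm_sub_le {x y} : l2 x -> l2 y -> sqnorm (subs x y) <= 2 * sqnorm x + 2 * sqnorm y.
Proof.
move=> hx hy; rewrite -lin_subs addrC; apply: le_trans (sqnorm_lin_le (-1) hy hx) _.
have -> : rdot (-1) (-1) = 1 :> R by rewrite /rdot /=; ring.
by rewrite mulr1.
Qed.

Lemma sqnorm_subC x y : sqnorm (subs x y) = sqnorm (subs y x).
Proof. by apply: eq_ssum => k; rewrite /subs -opprB rdotNl rdotC rdotNl opprK. Qed.

Lemma subss x : subs x x = zeros R.
Proof. by apply/funext => k; rewrite /subs /zeros subrr. Qed.

Lemma subs_subs x y z : subs (subs z y) (subs z x) = subs x y.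
Proof. by apply/funext => k; rewrite /subs opprB addrC addrA subrK. Qed.

Lemma subsK x y : subs x (subs x y) = y.
Proof. by apply/funext => k; rewrite /subs opprB addrC subrK. Qed.

Lemma subs_eq0 x y : subs x y = zeros R -> x = y.
Proof.
by move=> e; apply/funext => k; have /eqP := congr1 (fun z => z k) e; rewrite subr_eq0 => /eqP.
Qed.

Lemma sqnorm_zeros : sqnorm (zeros R) = 0.
Proof. by rewrite -(@ssum0 R); apply: eq_ssum => k; rewrite /rdot /=; ring. Qed.

End SquareSummable.

Section WeightedForms.
Context {R : realType}.
Local Notation C := R[i].
Local Notation seqC := (nat -> C).
Implicit Types (x y z : seqC) (w : nat -> R).

Definition bounded_weight w := exists K : R, forall k, 0 <= w k <= K.
Definition coercive_weight w := exists2 c : R, 0 < c & forall k, c <= w k.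
(* Real part of <diag(w) x, y>; the imaginary part is wdot w x (mulI y), see ipE. *)
Definition wdot w x y := ssum (fun k => w k * rdot (x k) (y k)).

Lemma bounded_weight1 : bounded_weight (fun=> 1).
Proof. by exists 1 => k; rewrite lexx ler01. Qed.

Lemma summable_wdot w x y : bounded_weight w -> l2 x -> l2 y ->
  summable (fun k => w k * rdot (x k) (y k)).
Proof.
move=> [K hK] hx hy.
apply: (summable_le _ (fun k => K * (rdot (x k) (x k) + rdot (y k) (y k)))); last first.
  by apply: summableZ; exact: summableD.
move=> k; have /andP[w0 wK] := hK k; rewrite normrM ger0_norm //.
apply: le_trans (ler_wpM2r (normr_ge0 _) wK) _.
apply: ler_wpM2l; first exact: le_trans wK.
have := rdot_cross _ (x k) (y k) ltr01; rewrite invr1 !mul1r.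
have := normr_ge0 (rdot (x k) (y k)); lra.
Qed.

Section Weight.
Context {w : nat -> R} (hw : bounded_weight w).

Lemma wdotC x y : wdot w x y = wdot w y x.
Proof. by apply: eq_ssum => k; rewrite rdotC. Qed.

Lemma wdot_ge0 {x} : l2 x -> 0 <= wdot w x x.
Proof.
move=> hx; apply: ssum_ge0; first exact: summable_wdot.
by move=> k; have [K /(_ k)/andP[w0 _]] := hw; apply: mulr_ge0 => //; exact: rdot_ge0.
Qed.

Lemma wdot0l y : wdot w (zeros R) y = 0.
Proof. by rewrite -(@ssum0 R); apply: eq_ssum => k; rewrite /zeros /rdot /=; ring. Qed.

Lemma wdot_lincomb3 (a b c : R) {x1 y1 x2 y2 x3 y3 x4 y4} :
  l2 x1 -> l2 y1 -> l2 x2 -> l2 y2 -> l2 x3 -> l2 y3 ->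
  (forall k, rdot (x4 k) (y4 k) =
     a * rdot (x1 k) (y1 k) + b * rdot (x2 k) (y2 k) + c * rdot (x3 k) (y3 k)) ->
  wdot w x4 y4 = a * wdot w x1 y1 + b * wdot w x2 y2 + c * wdot w x3 y3.
Proof.
move=> h1 h2 h3 h4 h5 h6 e.
rewrite /wdot -ssum_lincomb3; try exact: summable_wdot.
by apply: eq_ssum => k; rewrite e; ring.
Qed.

Lemma wdot_linl a {x y z} : l2 x -> l2 y -> l2 z ->
  wdot w (lin a x y) z = complex.Re a * wdot w x z - complex.Im a * wdot w x (mulI z) + wdot w y z.
Proof.
move=> hx hy hz; rewrite -[wdot w y z]mul1r -mulNr.
apply: wdot_lincomb3 => //; first exact: l2_mulI.
by move=> k; rewrite /lin rdotDl rdotMl; ring.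
Qed.

Lemma wdot_subl {x y z} : l2 x -> l2 y -> l2 z -> wdot w (subs x y) z = wdot w x z - wdot w y z.
Proof.
move=> hx hy hz; rewrite /wdot -ssumB; try exact: summable_wdot.
by apply: eq_ssum => k; rewrite /subs rdotDl rdotNl; ring.
Qed.

Lemma wdot_subr {x y z} : l2 x -> l2 y -> l2 z -> wdot w z (subs x y) = wdot w z x - wdot w z y.
Proof. by move=> hx hy hz; rewrite wdotC wdot_subl // (wdotC x) (wdotC y). Qed.

Lemma wdot_cross e {x y} : l2 x -> l2 y -> 0 < e ->
  2 * `|wdot w x y| <= e * wdot w x x + e^-1 * wdot w y y.
Proof.
move=> hx hy he; rewrite -normr_nat -normrM -ssumZ; last exact: summable_wdot.
rewrite /wdot -ssum_lincomb2; try exact: summable_wdot.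
apply: ler_norm_ssum; last by apply: summableD; apply: summableZ; exact: summable_wdot.
move=> k; have [K /(_ k)/andP[w0 _]] := hw.
rewrite normrM normr_nat normrM (ger0_norm w0) mulrCA.
rewrite [e * _]mulrCA [e^-1 * _]mulrCA -mulrDr; apply: ler_wpM2l => //.
exact: rdot_cross.
Qed.

Lemma wdot_lower c {x} : (forall k, c <= w k) -> l2 x -> c * sqnorm x <= wdot w x x.
Proof.
move=> hc hx; rewrite -ssumZ //.
apply: ssum_le; [exact: summableZ | exact: summable_wdot |].
by move=> k; apply: ler_wpM2r => //; exact: rdot_ge0.
Qed.

Lemma wdot_upper K {x} : (forall k, w k <= K) -> l2 x -> wdot w x x <= K * sqnorm x.
Proof.
move=> hK hx; rewrite -ssumZ //.
apply: ssum_le; [exact: summable_wdot | exact: summableZ |].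
by move=> k; apply: ler_wpM2r => //; exact: rdot_ge0.
Qed.

Lemma wdot_sub_sq {x y} : l2 x -> l2 y ->
  wdot w (subs x y) (subs x y) = wdot w x x + wdot w y y - 2 * wdot w x y.
Proof.
move=> hx hy; have hxy := l2_subs hx hy.
by rewrite wdot_subl // !wdot_subr // (wdotC y x); ring.
Qed.

Lemma wdot_le_sqnorm {x} : (forall k, w k <= 1) -> l2 x -> wdot w x x <= sqnorm x.
Proof. by move=> w1 hx; rewrite -[sqnorm x]mul1r; exact: wdot_upper. Qed.

End Weight.

Lemma wdot_weightD w1 w2 (r : R) x y : bounded_weight w1 -> bounded_weight w2 -> l2 x -> l2 y ->
  wdot (fun k => w1 k + r * w2 k) x y = wdot w1 x y + r * wdot w2 x y.
Proof.
move=> h1 h2 hx hy; rewrite -[wdot w1 x y]mul1r /wdot -ssum_lincomb2; try exact: summable_wdot.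
by apply: eq_ssum => k; ring.
Qed.

Lemma wdot_residual_identity w1 w2 (hn hm : R) {rn rm} :
  bounded_weight w1 -> bounded_weight w2 -> l2 rn -> l2 rm ->
  wdot w1 rn (subs rn rm) + hn * wdot w2 rn (subs rn rm) = 0 ->
  wdot w1 rm (subs rn rm) + hm * wdot w2 rm (subs rn rm) = 0 ->
  wdot w1 (subs rn rm) (subs rn rm) =
    (hn + hm) * wdot w2 rn rm - hn * wdot w2 rn rn - hm * wdot w2 rm rm.
Proof.
move=> h1 h2 hrn hrm on om; have hd := l2_subs hrn hrm; rewrite (wdot_subl h1) //.
rewrite !(wdot_subr h2) // (wdotC rm rn) in on om.
by lra.
Qed.

Lemma sqnormE x : sqnorm x = wdot (fun=> 1) x x.
Proof. by apply: eq_ssum => k; rewrite mul1r. Qed.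

End WeightedForms.

Section L2Convergence.
Context {R : realType}.
Local Notation C := R[i].
Local Notation seqC := (nat -> C).
Implicit Types (x y v : seqC) (u : nat -> seqC) (w : nat -> R).

Definition l2_cauchy u := forall e, 0 < e -> exists M, forall n m,
  (M <= n)%N -> (M <= m)%N -> sqnorm (subs (u n) (u m)) <= e.

Definition converges_to u v := forall e, 0 < e -> exists M, forall n,
  (M <= n)%N -> sqnorm (subs (u n) v) <= e.

Lemma cvgn_sqr_cauchy (a : nat -> R) :
  (forall e, 0 < e -> exists M, forall n m,
     (M <= n)%N -> (M <= m)%N -> (a n - a m) ^+ 2 <= e) ->
  cvgn a.
Proof.
move=> h; apply/cauchy_cvgP; apply: cauchy_exP => e he.
have e2 : 0 < e ^+ 2 by exact: exprn_gt0.
have [M hM] := h (e ^+ 2 / 2) (divr_gt0 e2 (ltr0n _ 2)).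
exists (a M), M => // n hn; rewrite /ball /=.
rewrite -(ltr_pXn2r (_ : (0 < 2)%N)) ?nnegrE ?normr_ge0 ?(ltW he) // real_normK ?num_real //.
by apply: le_lt_trans (hM M n (leqnn M) hn) _; lra.
Qed.

Lemma l2_complete {u} : (forall n, l2 (u n)) -> l2_cauchy u ->
  exists2 v, l2 v & converges_to u v.
Proof.
move=> hu hc.
have dist_le n m k : rdot (u n k - u m k) (u n k - u m k) <= sqnorm (subs (u n) (u m)).
  exact: (rdot_le_sqnorm _ k (l2_subs (hu n) (hu m))).
have cvg_Re k : cvgn (fun n => complex.Re (u n k)).
  apply: cvgn_sqr_cauchy => e he; have [M hM] := hc e he; exists M => n m hn hm.
  apply: le_trans (hM n m hn hm); apply: le_trans (dist_le n m k).
  by rewrite rdot_subE lerDl sqr_ge0.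
have cvg_Im k : cvgn (fun n => complex.Im (u n k)).
  apply: cvgn_sqr_cauchy => e he; have [M hM] := hc e he; exists M => n m hn hm.
  apply: le_trans (hM n m hn hm); apply: le_trans (dist_le n m k).
  by rewrite rdot_subE lerDr sqr_ge0.
have sqr_sub_cvg (c : R) (b : nat -> R) : cvgn b ->
    (fun m => (c - b m) * (c - b m)) @ \oo --> (c - limn b) * (c - limn b).
  by move=> hb; apply: cvgM; apply: cvgB => //; exact: cvg_cst.
pose v : seqC := fun k =>
  Complex (limn (fun n => complex.Re (u n k))) (limn (fun n => complex.Im (u n k))).
have near_v e : 0 < e -> exists M, forall n, (M <= n)%N ->
    l2 (subs (u n) v) /\ sqnorm (subs (u n) v) <= e.
  move=> he; have [M hM] := hc e he; exists M => n hn.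
  apply: summable_bounded => [k|K]; first exact: rdot_ge0.
  pose a m k := rdot (subs (u n) (u m) k) (subs (u n) (u m) k).
  have cv : (fun m => series (a m) K) @ \oo -->
             series (fun k => rdot (subs (u n) v k) (subs (u n) v k)) K.
    apply: cvg_series_ptwise => k; rewrite /a /subs rdot_subE /v /= !expr2.
    under eq_cvg do rewrite rdot_subE !expr2.
    by apply: cvgD; apply: sqr_sub_cvg.
  apply: (ler_cvg_to cv (cvg_cst e)); exists M => // m hm; apply: le_trans (hM n m hn hm).
  by apply: series_le_ssum; [exact: l2_subs | move=> k; exact: rdot_ge0].
have [M hM] := near_v 1 ltr01.
have hv : l2 v by rewrite -(subsK (u M) v); exact: l2_subs (hu M) (hM M (leqnn M)).1.
by exists v => // e he; have [M' hM'] := near_v e he; exists M' => n hn; exact: (hM' n hn).2.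
Qed.

Lemma converges_to_unique {u v1 v2} : (forall n, l2 (u n)) -> l2 v1 -> l2 v2 ->
  converges_to u v1 -> converges_to u v2 -> v1 = v2.
Proof.
move=> hu h1 h2 c1 c2.
apply: subs_eq0; apply: (sqnorm_eq0 (l2_subs h1 h2)).
apply/eqP; rewrite eq_le (sqnorm_ge0 (l2_subs h1 h2)) andbT; apply/ler_addgt0Pr => e he.
have [M1 hM1] := c1 _ (divr_gt0 he (ltr0n _ 4)); have [M2 hM2] := c2 _ (divr_gt0 he (ltr0n _ 4)).
pose n := maxn M1 M2.
have := hM1 n (leq_maxl _ _); have := hM2 n (leq_maxr _ _).
have := sqnorm_sub_le (l2_subs (hu n) h2) (l2_subs (hu n) h1).
rewrite subs_subs; lra.
Qed.

Lemma converges_to_lin a {u u' v v'} : (forall n, l2 (u n)) -> (forall n, l2 (u' n)) ->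
  l2 v -> l2 v' -> converges_to u v -> converges_to u' v' ->
  converges_to (fun n => lin a (u n) (u' n)) (lin a v v').
Proof.
move=> hu hu' hv hv' c c' e he.
have ra := rdot_ge0 a.
pose t := e / (4 * (rdot a a + 1)).
have t0 : 0 < t by apply: divr_gt0 => //; lra.
have ht : 4 * (rdot a a + 1) * t = e by rewrite /t mulrC divfK //; lra.
have [M1 hM1] := c t t0; have [M2 hM2] := c' (e / 4) (divr_gt0 he (ltr0n _ 4)).
exists (maxn M1 M2) => n; rewrite geq_max => /andP[hn1 hn2].
have -> : subs (lin a (u n) (u' n)) (lin a v v') = lin a (subs (u n) v) (subs (u' n) v').
  by apply/funext => k; rewrite /subs /lin opprD addrACA -mulrBr.
apply: le_trans (sqnorm_lin_le a (l2_subs (hu n) hv) (l2_subs (hu' n) hv')) _.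
have ra2 : 0 <= 2 * rdot a a by lra.
have := ler_wpM2l ra2 (hM1 n hn1); have := hM2 n hn2.
by have := mulr_ge0 ra (ltW t0); lra.
Qed.

Lemma converges_to_coord0 {u v} k : (forall n, u n k = 0) -> (forall n, l2 (u n)) -> l2 v ->
  converges_to u v -> v k = 0.
Proof.
move=> u0 hu hv c; apply: rdot_eq0; apply/eqP; rewrite eq_le rdot_ge0 andbT.
apply/ler_addgt0Pr => e he; rewrite add0r; have [M hM] := c e he.
apply: le_trans (hM M (leqnn M)); apply: le_trans (rdot_le_sqnorm _ k (l2_subs (hu M) hv)).
by rewrite /subs u0 sub0r rdotNl rdotC rdotNl opprK.
Qed.

Lemma converges_to_inH {N u v} : (forall n, inH N (u n)) -> l2 v -> converges_to u v -> inH N v.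
Proof.
move=> hu hv c; apply: l2_inH => // k hk.
by apply: (converges_to_coord0 k _ _ hv c) => n; [exact: (hu n).1 | exact: inH_l2].
Qed.

Lemma converges_to_hnorm {u v} : (forall n, l2 (u n)) -> l2 v -> converges_to u v ->
  (fun n => hnorm (subs (u n) v)) @ \oo --> 0.
Proof.
move=> hu hv c; apply/cvgrPdist_le => e he.
have [M hM] := c (e ^+ 2) (exprn_gt0 2 he).
exists M => // n hn; rewrite sub0r normrN hnormE ger0_norm ?sqrtr_ge0 //.
by rewrite -(ger0_norm (ltW he)) -sqrtr_sqr ler_sqrt ?sqr_ge0 ?hM.
Qed.

Lemma wdot_cvgl {w y u v} : bounded_weight w -> l2 y -> (forall n, l2 (u n)) -> l2 v ->
  converges_to u v -> (fun n => wdot w (u n) y) @ \oo --> wdot w v y.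
Proof.
move=> hw hy hu hv c; have [K hK] := hw.
have K0 : 0 <= K by case/andP: (hK 0%N) => h1 h2; exact: le_trans h2.
have wK k : w k <= K by case/andP: (hK k).
apply/cvgrPdist_le => e he.
pose B := K * sqnorm y + 1.
have B0 : 0 < B by have := mulr_ge0 K0 (sqnorm_ge0 hy); rewrite /B; lra.
pose eta := B / e.
have eta0 : 0 < eta by exact: divr_gt0.
have etaK : 0 < eta * (K + 1) by apply: mulr_gt0 => //; lra.
have [M hM] := c (e / (eta * (K + 1))) (divr_gt0 he etaK).
exists M => // n hn.
have hz : l2 (subs v (u n)) := l2_subs hv (hu n).
have sz := hM n hn; rewrite sqnorm_subC ler_pdivlMr // in sz.
rewrite -wdot_subl //.
have cross := wdot_cross hw eta hz hy eta0.
have u1 : eta * wdot w (subs v (u n)) (subs v (u n)) <= e.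
  apply: le_trans (ler_wpM2l (ltW eta0) (wdot_upper hw K wK hz)) _.
  by have := mulr_ge0 (ltW eta0) (sqnorm_ge0 hz); lra.
have u2 : eta^-1 * wdot w y y <= e.
  rewrite /eta invf_div mulrAC ler_pdivrMr // ler_wpM2l ?(ltW he) //.
  by apply: le_trans (wdot_upper hw K wK hy) _; rewrite /B lerDl.
by lra.
Qed.

End L2Convergence.

Section WeightedDistance.
Context {R : realType}.
Local Notation C := R[i].
Local Notation seqC := (nat -> C).
Implicit Types (x y s t u : seqC) (w : nat -> R).

Definition wdist2 w x s := wdot w (subs x s) (subs x s).
Definition midpoint s t : seqC := fun k => Complex (2^-1) 0 * (s k + t k).

Lemma midpointE s t :
  midpoint s t = lin (Complex (2^-1) 0) s (lin (Complex (2^-1) 0) t (zeros R)).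
Proof. by apply/funext => k; rewrite /midpoint /lin /zeros addr0 mulrDr. Qed.

Lemma l2_midpoint {s t} : l2 s -> l2 t -> l2 (midpoint s t).
Proof. by move=> hs ht; rewrite midpointE; apply: l2_lin hs (l2_lin _ ht l2_zeros). Qed.

Context {w : nat -> R} (hw : bounded_weight w).

Lemma wdist2_parallelogram x s t : l2 x -> l2 s -> l2 t ->
  wdot w (subs s t) (subs s t) =
  2 * wdist2 w x s + 2 * wdist2 w x t + (-4) * wdist2 w x (midpoint s t).
Proof.
move=> hx hs ht; have hm := l2_midpoint hs ht.
apply: (wdot_lincomb3 hw); try exact: l2_subs.
move=> k; rewrite /midpoint /subs.
by case: (x k) => ? ?; case: (s k) => ? ?; case: (t k) => ? ?; simpc; rewrite /rdot /=; field.
Qed.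

Lemma wdist2_le {x u s} : l2 x -> l2 u -> l2 s ->
  wdist2 w x u <= wdist2 w x s + 2 * wdot w (subs x u) (subs s u).
Proof.
move=> hx hu hs; have hxu := l2_subs hx hu; have hxs := l2_subs hx hs.
rewrite /wdist2 -(subs_subs s u x) [X in _ + 2 * X]wdot_subr //.
have := wdot_cross hw 1 hxu hxs ltr01; rewrite invr1 !mul1r.
by have := ler_norm (wdot w (subs x u) (subs x s)); lra.
Qed.

Lemma wdist2_le_lim {x u} (s : nat -> seqC) (d : R) : l2 x -> l2 u -> (forall n, l2 (s n)) ->
  converges_to s u -> (forall n, wdist2 w x (s n) <= d + harmonic n) -> wdist2 w x u <= d.
Proof.
move=> hx hu hs cu hd; have hxu := l2_subs hx hu.
have bound n : wdist2 w x u <=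
    d + harmonic n + 2 * (wdot w (s n) (subs x u) - wdot w u (subs x u)).
  apply: le_trans (wdist2_le hx hu (hs n)) _.
  by rewrite wdotC wdot_subl //; have := hd n; lra.
have lim : (fun n => d + harmonic n + 2 * (wdot w (s n) (subs x u) - wdot w u (subs x u)))
    @ \oo --> d + 0 + 2 * (wdot w u (subs x u) - wdot w u (subs x u)).
  apply: cvgD; first by apply: cvgD; [exact: cvg_cst | exact: cvg_harmonic].
  apply: cvgM; first exact: cvg_cst.
  by apply: cvgB; [exact: wdot_cvgl hw hxu hs hu cu | exact: cvg_cst].
suff : wdist2 w x u <= d + 0 + 2 * (wdot w u (subs x u) - wdot w u (subs x u)).
  by rewrite subrr mulr0 !addr0.
by apply: (ler_cvg_to (cvg_cst _) lim); exact: (nearW _ bound).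
Qed.

End WeightedDistance.

Section ClosedSubspace.
Context {R : realType} {N : option nat} {S : set (nat -> R[i])}.
Hypothesis hS : closed_subspace N S.
Local Notation C := R[i].
Local Notation seqC := (nat -> C).
Implicit Types (x y s t u : seqC) (w : nat -> R).

Lemma S_inH {s} : S s -> inH N s.
Proof. exact: hS.1. Qed.

Lemma S_l2 {s} : S s -> l2 s.
Proof. by move=> hs; exact: inH_l2 (S_inH hs). Qed.

Lemma S_zeros : S (zeros R).
Proof. exact: hS.2.1. Qed.

Lemma S_lin a {s t} : S s -> S t -> S (lin a s t).
Proof. exact: hS.2.2.1. Qed.

Lemma S_subs {s t} : S s -> S t -> S (subs s t).
Proof. by move=> hs ht; rewrite -lin_subs; exact: S_lin. Qed.

Lemma S_mulI {s} : S s -> S (mulI s).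
Proof. by move=> hs; rewrite -lin_mulI; exact: S_lin hs S_zeros. Qed.

Lemma S_midpoint {s t} : S s -> S t -> S (midpoint s t).
Proof. by move=> hs ht; rewrite midpointE; apply: S_lin hs (S_lin _ ht S_zeros). Qed.

Lemma S_closed (u : nat -> seqC) x : (forall n, S (u n)) -> l2 x -> converges_to u x -> S x.
Proof.
move=> hu hx c; have hu2 n := S_l2 (hu n).
apply: (hS.2.2.2 u) => //; first exact: (converges_to_inH (fun n => S_inH (hu n)) hx c).
exact: converges_to_hnorm hu2 hx c.
Qed.

Definition is_wproj w x u := S u /\ forall t, S t -> wdot w (subs x u) t = 0.

Definition wproj w x : seqC :=
  if pselect (exists u, is_wproj w x u) is left h then proj1_sig (cid h) else zeros R.

Section Weight.
Context {w : nat -> R} (hw : bounded_weight w) (hc : coercive_weight w).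

Lemma is_wproj_unique {x u1 u2} : l2 x -> is_wproj w x u1 -> is_wproj w x u2 -> u1 = u2.
Proof.
move=> hx [h1 o1] [h2 o2]; have [c c0 hcw] := hc.
have hd := S_l2 (S_subs h1 h2).
have hx1 := l2_subs hx (S_l2 h1); have hx2 := l2_subs hx (S_l2 h2).
have d0 : wdot w (subs u1 u2) (subs u1 u2) = 0.
  by rewrite -{1}(subs_subs u1 u2 x) wdot_subl // o1 ?o2 ?subrr //; exact: S_subs h1 h2.
apply: subs_eq0; apply: (sqnorm_eq0 hd); apply/eqP; rewrite eq_le sqnorm_ge0 // andbT.
rewrite -(pmulr_rle0 _ c0) -[X in _ <= X]d0.
by have := wdot_lower hw c hcw hd.
Qed.

Lemma is_wproj_of_min x u : l2 x -> S u ->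
  (forall s, S s -> wdist2 w x u <= wdist2 w x s) -> is_wproj w x u.
Proof.
move=> hx hu hmin; split => // t ht.
have ht2 := S_l2 ht; have hu2 := S_l2 hu; have hxu := l2_subs hx hu2.
pose r := wdot w (subs x u) t; pose T := wdot w t t.
have T0 : 0 <= T := wdot_ge0 hw ht2.
have var (lam : R) : 0 <= (-2 * lam) * r + lam ^+ 2 * T.
  have := hmin _ (S_lin (Complex lam 0) ht hu).
  suff -> : wdist2 w x (lin (Complex lam 0) t u) =
            1 * wdist2 w x u + (-2 * lam) * r + lam ^+ 2 * T by lra.
  apply: (wdot_lincomb3 hw) => // k; rewrite /subs /lin.
  by case: (x k) => ? ?; case: (t k) => ? ?; case: (u k) => ? ?; simpc; rewrite /rdot /=; ring.
(* The choice lam = r / (T + 1) turns var into - lam^2 (T + 2) >= 0. *)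
have T1 : 0 < T + 1 by lra.
have hr : r = r / (T + 1) * (T + 1) by rewrite divfK // gt_eqF.
move: (var (r / (T + 1))) hr; move: (r / (T + 1)) => lam h hr.
have : lam ^+ 2 * (T + 2) <= 0 by rewrite hr in h; lra.
rewrite pmulr_lle0; last by lra.
move=> lam2; have /eqP : lam ^+ 2 = 0 by apply/eqP; rewrite eq_le lam2 sqr_ge0.
by rewrite sqrf_eq0 => /eqP lam0; move: hr; rewrite lam0 mul0r.
Qed.

Lemma wdist2_minimizing_cauchy {x} (s : nat -> seqC) (d : R) : l2 x ->
  (forall n, S (s n)) -> (forall t, S t -> d <= wdist2 w x t) ->
  (forall n, wdist2 w x (s n) <= d + harmonic n) -> l2_cauchy s.
Proof.
move=> hx hs d_le hsn e he; have [c c0 hcw] := hc.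
have hs2 n := S_l2 (hs n).
have [M hM] := harmonic_eventually_le _ (divr_gt0 (mulr_gt0 c0 he) (ltr0n _ 4)).
exists M => n m hn hm; rewrite -(ler_pM2l c0).
apply: le_trans (wdot_lower hw c hcw (l2_subs (hs2 n) (hs2 m))) _.
rewrite (wdist2_parallelogram hw x) //.
have := d_le _ (S_midpoint (hs n) (hs m)); have := hsn n; have := hsn m.
by have := hM n hn; have := hM m hm; lra.
Qed.

Lemma wdist2_minimizer {x} : l2 x ->
  exists2 u, S u & forall s, S s -> wdist2 w x u <= wdist2 w x s.
Proof.
move=> hx; pose E := [set r | exists2 s, S s & r = wdist2 w x s].
have hE : has_inf E.
  split; first by exists (wdist2 w x (zeros R)), (zeros R); first exact: S_zeros.
  by exists 0 => _ [s hs ->]; have := wdot_ge0 hw (l2_subs hx (S_l2 hs)).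
have d_le s : S s -> inf E <= wdist2 w x s by move=> hs; apply: (ge_inf hE.2); exists s.
have approx n : exists s, S s /\ wdist2 w x s <= inf E + harmonic n.
  have [_ [s hs ->] hr] := inf_adherent (harmonic_gt0 n) hE.
  by exists s; split => //; exact: ltW.
have [s hsn] := choice approx.
have hs n : S (s n) := (hsn n).1.
have hsE n : wdist2 w x (s n) <= inf E + harmonic n := (hsn n).2.
have [u hu cu] := l2_complete (fun n => S_l2 (hs n)) (wdist2_minimizing_cauchy _ _ hx hs d_le hsE).
exists u; first exact: S_closed hs hu cu.
move=> t ht; apply: le_trans (d_le t ht).
exact (wdist2_le_lim hw _ _ hx hu (fun n => S_l2 (hs n)) cu hsE).
Qed.

Lemma wproj_spec {x} : l2 x -> is_wproj w x (wproj w x).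
Proof.
move=> hx; rewrite /wproj; case: pselect => [h|[]]; first exact: proj2_sig (cid h).
by have [u hu hmin] := wdist2_minimizer hx; exists u; exact: is_wproj_of_min.
Qed.

Lemma wproj_eq {x u} : l2 x -> is_wproj w x u -> wproj w x = u.
Proof. by move=> hx; apply: is_wproj_unique hx (wproj_spec hx). Qed.

Lemma wproj_S {x} : l2 x -> S (wproj w x).
Proof. by move=> hx; case: (wproj_spec hx). Qed.

Lemma wproj_orth {x t} : l2 x -> S t -> wdot w (subs x (wproj w x)) t = 0.
Proof. by move=> hx; case: (wproj_spec hx) => _; apply. Qed.

Lemma wproj_l2 {x} : l2 x -> l2 (wproj w x).
Proof. by move=> hx; exact: S_l2 (wproj_S hx). Qed.

Lemma wproj_fix {s} : S s -> wproj w s = s.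
Proof. by move=> hs; apply: wproj_eq (S_l2 hs) _; split => // t _; rewrite subss wdot0l. Qed.

Lemma wproj_lin a {x y} : l2 x -> l2 y -> wproj w (lin a x y) = lin a (wproj w x) (wproj w y).
Proof.
move=> hx hy; apply: wproj_eq; first exact: l2_lin.
split; first by apply: S_lin; exact: wproj_S.
move=> t ht; have ht2 := S_l2 ht.
have -> : subs (lin a x y) (lin a (wproj w x) (wproj w y)) =
          lin a (subs x (wproj w x)) (subs y (wproj w y)).
  by apply/funext => k; rewrite /subs /lin opprD addrACA -mulrBr.
have hpx := l2_subs hx (wproj_l2 hx); have hpy := l2_subs hy (wproj_l2 hy).
rewrite (wdot_linl hw) // (wproj_orth hx ht) (wproj_orth hx (S_mulI ht)) (wproj_orth hy ht).
by rewrite !mulr0 subrr add0r.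
Qed.

Lemma wproj_sym {x y} : l2 x -> l2 y -> wdot w (wproj w x) y = wdot w x (wproj w y).
Proof.
move=> hx hy; have hpx := wproj_l2 hx; have hpy := wproj_l2 hy.
have e1 := wproj_orth hx (wproj_S hy); have e2 := wproj_orth hy (wproj_S hx).
rewrite wdot_subl // in e1; rewrite wdot_subl // (wdotC (wproj w y)) in e2.
move/eqP: e1; move/eqP: e2; rewrite !subr_eq0 => /eqP e2 /eqP e1.
by rewrite (wdotC _ y) e1 e2.
Qed.

Lemma wproj_contr {x} : l2 x -> wdot w (wproj w x) (wproj w x) <= wdot w x x.
Proof.
move=> hx; have hp := wproj_l2 hx; have hd := l2_subs hx hp.
have -> : wdot w x x = 1 * wdot w (wproj w x) (wproj w x)
    + 2 * wdot w (subs x (wproj w x)) (wproj w x) + 1 * wdot w (subs x (wproj w x)) (subs x (wproj w x)).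
  apply: (wdot_lincomb3 hw) => // k; rewrite /subs.
  by case: (x k) => ? ?; case: (wproj w x k) => ? ?; rewrite /rdot /=; ring.
by rewrite (wproj_orth hx (wproj_S hx)); have := wdot_ge0 hw hd; lra.
Qed.

End Weight.

End ClosedSubspace.

Arguments is_wproj {R} S w x u.
Arguments wproj {R} S w x.

Section DiagonalOperators.
Context {R : realType}.
Local Notation C := R[i].
Local Notation seqC := (nat -> C).
Implicit Types (x y : seqC) (d : nat -> R) (q : nat -> bool).

Definition indicator q : nat -> R := fun k => if q k then 1 else 0.

Definition coindicator q : nat -> R := fun k => if q k then 0 else 1.
Definition qweight q n : nat -> R := fun k => if q k then 1 else harmonic n.

Lemma bounded_indicator q : bounded_weight (indicator q).
Proof. by exists 1 => k; rewrite /indicator; case: (q k); rewrite ?lexx ?ler01. Qed.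

Lemma bounded_coindicator q : bounded_weight (coindicator q).
Proof. by exists 1 => k; rewrite /coindicator; case: (q k); rewrite ?lexx ?ler01. Qed.

Lemma bounded_qweight q n : bounded_weight (qweight q n).
Proof.
exists 1 => k; rewrite /qweight; case: (q k); first by rewrite ler01 lexx.
by rewrite harmonic_ge0 harmonic_le1.
Qed.

Lemma coercive_qweight q n : coercive_weight (qweight q n).
Proof. by exists (harmonic n) => [|k]; rewrite ?harmonic_gt0 // /qweight; case: (q k); rewrite ?harmonic_le1. Qed.

Lemma Dplus_qweight N q n : Dplus N (qweight q n).
Proof.
exists (harmonic n), 1; split => [|k _]; first exact: harmonic_gt0.
rewrite /qweight.
by case: (q k); rewrite ?harmonic_le1 ?lexx.
Qed.

Lemma wdot_qweight q n {x y} : l2 x -> l2 y ->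
  wdot (qweight q n) x y = wdot (indicator q) x y + harmonic n * wdot (coindicator q) x y.
Proof.
move=> hx hy; rewrite -wdot_weightD //; try exact: bounded_indicator; last exact: bounded_coindicator.
by congr wdot; apply/funext => k; rewrite /qweight /indicator /coindicator; case: (q k); ring.
Qed.

Lemma sqnorm_split q {x} : l2 x ->
  sqnorm x = wdot (indicator q) x x + wdot (coindicator q) x x.
Proof.
move=> hx; rewrite -[wdot (coindicator q) x x]mul1r -wdot_weightD //;
  try exact: bounded_indicator; last exact: bounded_coindicator.
by rewrite sqnormE; congr wdot; apply/funext => k; rewrite /indicator /coindicator; case: (q k); ring.
Qed.

Lemma diagP_diagR q : diagP q = diagR (indicator q).
Proof. by apply/funext => x; apply/funext => k; rewrite /diagP /diagR /diag /indicator; case: (q k). Qed.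

Lemma ipE x y : ip x y = Complex (wdot (fun=> 1) x y) (wdot (fun=> 1) x (mulI y)).
Proof.
rewrite /ip /wdot /ssum; congr Complex; congr (limn (series _)); apply/funext => k.
  by rewrite Re_mulconj mul1r.
by rewrite Im_mulconj mul1r.
Qed.

Lemma wdot_diagR d x y : wdot (fun=> 1) (diagR d x) y = wdot d x y.
Proof. by apply: eq_ssum => k; rewrite /diagR /diag mul1r rdotRl. Qed.

Lemma ip_diagR d x y : ip (diagR d x) y = Complex (wdot d x y) (wdot d x (mulI y)).
Proof. by rewrite ipE !wdot_diagR. Qed.

Lemma l2_diagR d (K : R) {x} : (forall k, 0 <= d k <= K) -> l2 x -> l2 (diagR d x).
Proof.
move=> hd; apply: (l2_mul _ (K * K)) => k; have /andP[d0 dK] := hd k.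
by rewrite /rdot /= mul0r addr0; exact: ler_pM.
Qed.

Lemma hnorm_le_of_sqnorm x y (M : R) : 0 <= M -> l2 x ->
  sqnorm y <= M ^+ 2 * sqnorm x -> hnorm y <= M * hnorm x.
Proof.
move=> M0 hx h; rewrite !hnormE -(ger0_norm M0) -sqrtr_sqr -sqrtrM ?sqr_ge0 //.
by rewrite ler_sqrt // mulr_ge0 ?sqr_ge0 ?sqnorm_ge0.
Qed.

Lemma sqnorm_le_of_hnorm x y (M : R) : l2 x -> l2 y ->
  hnorm y <= M * hnorm x -> sqnorm y <= M ^+ 2 * sqnorm x.
Proof.
move=> hx hy; rewrite !hnormE => h.
have y0 : 0 <= Num.sqrt (sqnorm y) := sqrtr_ge0 _.
have := ler_pM y0 y0 h h; rewrite -expr2 sqr_sqrtr ?sqnorm_ge0 //.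
by rewrite mulrACA -expr2 -expr2 sqr_sqrtr ?sqnorm_ge0.
Qed.

End DiagonalOperators.

Section Compression.
Context {R : realType} {N : option nat} {S : set (nat -> R[i])}.
Hypothesis hS : closed_subspace N S.
Context {d : nat -> R} (hb : bounded_weight d) (hc : coercive_weight d).
Local Notation seqC := (nat -> R[i]).
Implicit Types (x y z s t : seqC).

Lemma wproj_bounded_op : bounded_op N (wproj S d).
Proof.
have [K hK] := hb; have [c c0 hcd] := hc.
have dK k : d k <= K by case/andP: (hK k).
split; first by move=> x hx; exact (S_inH hS (wproj_S hS hb hc (inH_l2 hx))).
split; first by move=> a x y hx hy; exact (wproj_lin hS hb hc a (inH_l2 hx) (inH_l2 hy)).
have K0 : 0 <= K by case/andP: (hK 0%N) => h1 h2; exact: le_trans h2.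
exists (Num.sqrt (K / c)) => x /inH_l2 hx.
apply: hnorm_le_of_sqnorm => //; first exact: sqrtr_ge0.
rewrite sqr_sqrtr ?divr_ge0 ?(ltW c0) // mulrAC ler_pdivlMr //.
have hp := wproj_l2 hS hb hc hx.
have := wdot_lower hb c hcd hp; have := wdot_upper hb K dK hx.
have := wproj_contr hS hb hc hx; rewrite mulrC; lra.
Qed.

(* The compression of D to S is onto: z = P_S D s for s = wproj d (D^-1 z). *)
Lemma compression_onto {z} : S z -> exists s, S s /\ is_orth_proj S (diagR d s) z.
Proof.
move=> hz; have hz2 := S_l2 hS hz; have [c c0 hcd] := hc; have [K hK] := hb.
have d0 k : 0 < d k by exact: lt_le_trans (hcd k).
pose dinv k := (d k)^-1.
have hdinv : l2 (diagR dinv z).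
  apply: (l2_diagR dinv c^-1 _ hz2) => k.
  by rewrite /dinv invr_ge0 ltW //= lef_pV2 ?posrE.
pose s := wproj S d (diagR dinv z).
have hs := wproj_S hS hb hc hdinv; have hs2 := S_l2 hS hs.
have hDs := l2_diagR d K hK hs2.
exists s; split => //; split => // t ht.
have dinvK y : wdot d (diagR dinv z) y = wdot (fun=> 1) z y.
  by apply: eq_ssum => k; rewrite /diagR /diag rdotRl /dinv mulrA mulfV ?gt_eqF.
have o y : S y -> wdot (fun=> 1) (subs (diagR d s) z) y = 0.
  move=> Sy; have hy := S_l2 hS Sy; have := wproj_orth hS hb hc hdinv Sy.
  rewrite (wdot_subl hb) // dinvK (wdot_subl bounded_weight1) // wdot_diagR.
  by lra.
by rewrite ipE (o _ ht) (o _ (S_mulI hS ht)).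
Qed.

Lemma wproj_is_PAS : is_PAS N (diagR d) S (wproj S d).
Proof.
split; first exact: wproj_bounded_op.
split; first by move=> x /inH_l2 hx; exact (wproj_S hS hb hc hx).
split; first by move=> s hs; exact (wproj_fix hS hb hc hs).
split.
  move=> y [/inH_l2 hy _] s hs; have hs2 := S_l2 hS hs; have hp := wproj_l2 hS hb hc hy.
  have o1 := wproj_orth hS hb hc hy hs; have o2 := wproj_orth hS hb hc hy (S_mulI hS hs).
  have hsi := l2_mulI hs2; rewrite !(wdot_subl hb) // in o1 o2.
  by rewrite !ip_diagR; congr Complex; lra.
move=> y [/inH_l2 hy _] e he; exists (wproj S d y); split.
  exact (compression_onto (wproj_S hS hb hc hy)).
by rewrite subss hnormE sqnorm_zeros sqrtr0.
Qed.

End Compression.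

Section Energy.
Context {R : realType}.

(* hn, hm: the weights 1/(n+1) > 1/(m+1); An, Am: the off-q energies; c: their cross
   term.  The two bracketed quantities are the on-q and off-q parts of |P_m x - P_n x|^2. *)
Lemma energy_ineq (hn hm An Am c : R) : 0 < hm -> hm < hn -> 0 <= An -> 0 <= Am ->
  0 <= (hn + hm) * c - hn * An - hm * Am -> 0 <= An + Am - 2 * c ->
  An <= Am /\
  ((hn + hm) * c - hn * An - hm * Am) + (An + Am - 2 * c) <= Am - An + hn * Am.
Proof.
move=> hm0 hmn An0 Am0 al0 be0.
have hnm : 0 < hn + hm by lra.
have f1 : (hn + hm) * (2 * c) <= (hn + hm) * (An + Am) by apply: ler_wpM2l; lra.
have le_AnAm : An <= Am.
  rewrite leNgt; apply/negP => lt.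
  have d1 : 0 < hn - hm by lra.
  have d2 : 0 < An - Am by lra.
  by have := mulr_gt0 d1 d2; lra.
have f2 : hm * An <= hm * Am by apply: ler_wpM2l; lra.
have f3 := mulr_ge0 (ltW (lt_trans hm0 hmn)) Am0.
have f4 := mulr_ge0 (ltW (lt_trans hm0 hmn)) An0.
have le_Anc : An <= c by rewrite -(ler_pM2l hnm); lra.
by split => //; lra.
Qed.

Lemma l2_cauchy_of_energy (u : nat -> nat -> R[i]) (A : nat -> R) (B : R) :
  (forall n, 0 <= A n <= B) ->
  (forall n m, (n < m)%N ->
     A n <= A m /\ sqnorm (subs (u m) (u n)) <= A m - A n + harmonic n * A m) ->
  l2_cauchy u.
Proof.
move=> hA step.
have Aup n m : (n <= m)%N -> A n <= A m.
  by rewrite leq_eqVlt => /orP[/eqP -> // | /step[]].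
have cA : cvgn A.
  apply: nondecreasing_is_cvgn; first by move=> n m; exact: Aup.
  by exists B => _ [n _ <-]; case/andP: (hA n).
have A_le n : A n <= limn A by apply: nondecreasing_cvgn_le => // i j; exact: Aup.
have B0 : 0 <= B by case/andP: (hA 0%N) => h1 h2; exact: le_trans h2.
move=> e he.
have /cvgrPdist_lt /(_ (e / 2) (divr_gt0 he (ltr0n _ 2))) [M1 _ hM1] := cA.
have B1 : 0 < 2 * (B + 1) by lra.
have [M2 hM2] := harmonic_eventually_le _ (divr_gt0 he B1).
have close i j : (M1 <= i)%N -> (M2 <= i)%N -> (i < j)%N -> sqnorm (subs (u j) (u i)) <= e.
  move=> i1 i2 ij; have [_ h] := step i j ij.
  have hAj : harmonic i * A j <= e / 2.
    have /andP[Aj0 AjB] := hA j.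
    apply: le_trans (ler_wpM2l (harmonic_ge0 i) AjB) _.
    apply: le_trans (ler_wpM2r B0 (hM2 i i2)) _.
    by rewrite mulrAC ler_pdivrMr //; have := mulr_ge0 (ltW he) B0; lra.
  have := hM1 i i1; rewrite ltr_norml => /andP[_].
  by have := A_le j; lra.
exists (maxn M1 M2) => n m; rewrite !geq_max => /andP[n1 n2] /andP[m1 m2].
case: (ltngtP n m) => [nm|mn|->].
- by rewrite sqnorm_subC; exact: close.
- exact: close.
- by rewrite subss sqnorm_zeros; exact: ltW.
Qed.

End Energy.

Section Approximation.
Context {R : realType} {N : option nat} {S : set (nat -> R[i])}.
Hypothesis hS : closed_subspace N S.
Context {q : nat -> bool} {M0 : R}.
Hypothesis hM : forall d : nat -> R, Dplus N d ->
  forall P, is_PAS N (diagR d) S P -> opnorm_le N P M0.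
Local Notation seqC := (nat -> R[i]).
Local Notation P n := (wproj S (qweight q n)).
Implicit Types (x y : seqC).

Let hb n : bounded_weight (@qweight R q n) := bounded_qweight q n.
Let hc n : coercive_weight (@qweight R q n) := coercive_qweight q n.

Lemma Pq_l2 n {x} : l2 x -> l2 (P n x).
Proof. exact (wproj_l2 hS (hb n) (hc n)). Qed.

Lemma Pq_S n {x} : l2 x -> S (P n x).
Proof. exact (wproj_S hS (hb n) (hc n)). Qed.

Lemma Pq_orth n {x t} : l2 x -> S t ->
  wdot (indicator q) (subs x (P n x)) t
  + harmonic n * wdot (coindicator q) (subs x (P n x)) t = 0.
Proof.
move=> hx ht; have hr := l2_subs hx (Pq_l2 n hx); have ht2 := S_l2 hS ht.
by rewrite -(wdot_qweight q n hr ht2); exact (wproj_orth hS (hb n) (hc n) hx ht).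
Qed.

Lemma Pq_bound n {x} : inH N x -> sqnorm (P n x) <= M0 ^+ 2 * sqnorm x.
Proof.
move=> hx; apply: sqnorm_le_of_hnorm (inH_l2 hx) (Pq_l2 n (inH_l2 hx)) _.
exact (hM _ (Dplus_qweight N q n) _ (wproj_is_PAS hS (hb n) (hc n)) x hx).
Qed.

Definition off_energy n x := wdot (coindicator q) (subs x (P n x)) (subs x (P n x)).

Lemma off_energy_step x n m : l2 x -> (n < m)%N ->
  off_energy n x <= off_energy m x /\
  sqnorm (subs (P m x) (P n x)) <= off_energy m x - off_energy n x + harmonic n * off_energy m x.
Proof.
move=> hx nm; rewrite /off_energy.
have hd : subs (P m x) (P n x) = subs (subs x (P n x)) (subs x (P m x)) by rewrite subs_subs.
have Sd : S (subs (subs x (P n x)) (subs x (P m x))).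
  by rewrite -hd; apply: (S_subs hS); exact: Pq_S.
have on := Pq_orth n hx Sd; have om := Pq_orth m hx Sd.
have hrn := l2_subs hx (Pq_l2 n hx); have hrm := l2_subs hx (Pq_l2 m hx).
rewrite hd; move: Sd on om hrn hrm.
move: (subs x (P n x)) (subs x (P m x)) => rn rm Sd on om hrn hrm.
have hdl := S_l2 hS Sd.
have al := wdot_residual_identity _ _ _ _ (bounded_indicator q) (bounded_coindicator q) hrn hrm on om.
have be := wdot_sub_sq (bounded_coindicator q) hrn hrm.
have al0 := wdot_ge0 (bounded_indicator q) hdl; rewrite al in al0.
have be0 := wdot_ge0 (bounded_coindicator q) hdl; rewrite be in be0.
have [le_nm bound] := energy_ineq _ _ _ _ _ (harmonic_gt0 m) (harmonic_ltn _ _ nm)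
  (wdot_ge0 (bounded_coindicator q) hrn) (wdot_ge0 (bounded_coindicator q) hrm) al0 be0.
by split => //; rewrite (sqnorm_split q hdl) al be.
Qed.

Lemma Pq_cauchy {x} : inH N x -> l2_cauchy (fun n => P n x).
Proof.
move=> hx; have hx2 := inH_l2 hx.
apply: (l2_cauchy_of_energy _ (fun n => off_energy n x) (2 * sqnorm x + 2 * (M0 ^+ 2 * sqnorm x))).
  move=> n; have hr := l2_subs hx2 (Pq_l2 n hx2).
  rewrite /off_energy wdot_ge0 //=; last exact: bounded_coindicator.
  apply: le_trans (wdot_le_sqnorm (bounded_coindicator q) _ hr) _.
    by move=> k; rewrite /coindicator; case: (q k); rewrite ?ler01.
  apply: le_trans (sqnorm_sub_le hx2 (Pq_l2 n hx2)) _.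
  by have := Pq_bound n hx; lra.
by move=> n m nm; exact: off_energy_step.
Qed.

Definition Qlim x : seqC :=
  if pselect (exists v, l2 v /\ converges_to (fun n => P n x) v) is left h
  then proj1_sig (cid h) else zeros R.

Lemma Qlim_spec {x} : inH N x -> l2 (Qlim x) /\ converges_to (fun n => P n x) (Qlim x).
Proof.
move=> hx; rewrite /Qlim; case: pselect => [h|[]]; first exact: proj2_sig (cid h).
have [v hv cv] := l2_complete (fun n => Pq_l2 n (inH_l2 hx)) (Pq_cauchy hx).
by exists v.
Qed.

Lemma Qlim_eq {x v} : inH N x -> l2 v -> converges_to (fun n => P n x) v -> Qlim x = v.
Proof.
move=> hx hv cv; have [hq cq] := Qlim_spec hx.
exact: converges_to_unique (fun n => Pq_l2 n (inH_l2 hx)) hq hv cq cv.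
Qed.

Lemma Qlim_S {x} : inH N x -> S (Qlim x).
Proof.
move=> hx; have [hq cq] := Qlim_spec hx.
exact: S_closed hS _ _ (fun n => Pq_S n (inH_l2 hx)) hq cq.
Qed.

Lemma Qlim_fix {s} : S s -> Qlim s = s.
Proof.
move=> hs; apply: Qlim_eq (S_inH hS hs) (S_l2 hS hs) _ => e he; exists 0%N => n _.
by rewrite (wproj_fix hS (hb n) (hc n) hs) subss sqnorm_zeros ltW.
Qed.

Lemma Qlim_lin a {x y} : inH N x -> inH N y -> Qlim (lin a x y) = lin a (Qlim x) (Qlim y).
Proof.
move=> hx hy; have [hqx cx] := Qlim_spec hx; have [hqy cy] := Qlim_spec hy.
have hx2 := inH_l2 hx; have hy2 := inH_l2 hy.
apply: Qlim_eq; [exact: inH_lin | exact: l2_lin |].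
have -> : (fun n => P n (lin a x y)) = (fun n => lin a (P n x) (P n y)).
  by apply/funext => n; exact: (wproj_lin hS (hb n) (hc n) a hx2 hy2).
by apply: converges_to_lin => // n; exact: Pq_l2.
Qed.

Lemma Qlim_mulI {y} : inH N y -> Qlim (mulI y) = mulI (Qlim y).
Proof.
move=> hy; have h0 := S_inH hS (S_zeros hS).
by rewrite -!lin_mulI (Qlim_lin _ hy h0) (Qlim_fix (S_zeros hS)).
Qed.

Lemma Qlim_bound {x} : inH N x -> sqnorm (Qlim x) <= 2 * M0 ^+ 2 * sqnorm x.
Proof.
move=> hx; have [hq cq] := Qlim_spec hx; apply/ler_addgt0Pr => e he.
have [M hM'] := cq (e / 2) (divr_gt0 he (ltr0n _ 2)).
have hp := Pq_l2 M (inH_l2 hx).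
have := sqnorm_sub_le hp (l2_subs hp hq); rewrite subsK.
by have := hM' M (leqnn M); have := Pq_bound M hx; lra.
Qed.

(* In the limit of the w_n-symmetry of P n the off-q part, weighted by harmonic n, vanishes. *)
Lemma Qlim_sym {x y} : inH N x -> inH N y ->
  wdot (indicator q) (Qlim x) y = wdot (indicator q) x (Qlim y).
Proof.
move=> hx hy; have hx2 := inH_l2 hx; have hy2 := inH_l2 hy.
have [hqx cx] := Qlim_spec hx; have [hqy cy] := Qlim_spec hy.
have lim (u : nat -> seqC) v z : (forall n, l2 (u n)) -> l2 v -> l2 z -> converges_to u v ->
    (fun n => wdot (qweight q n) (u n) z) @ \oo -->
    wdot (indicator q) v z + 0 * wdot (coindicator q) v z.
  move=> hu hv hz c; under eq_cvg => n do rewrite (wdot_qweight q n (hu n) hz).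
  apply: cvgD; first exact: wdot_cvgl (bounded_indicator q) hz hu hv c.
  by apply: cvgM; [exact: cvg_harmonic | exact: wdot_cvgl (bounded_coindicator q) hz hu hv c].
have l1 := lim _ _ _ (fun n => Pq_l2 n hx2) hqx hy2 cx.
have l2' := lim _ _ _ (fun n => Pq_l2 n hy2) hqy hx2 cy.
have e : (fun n => wdot (qweight q n) (P n x) y) = (fun n => wdot (qweight q n) (P n y) x).
  by apply/funext => n; rewrite (wproj_sym hS (hb n) (hc n) hx2 hy2) wdotC.
rewrite e in l1; pose proof (cvg_unique (@Rhausdorff R) l1 l2') as lims.
by rewrite !mul0r !addr0 in lims; rewrite lims wdotC.
Qed.

Lemma Qlim_bounded_op : bounded_op N Qlim.
Proof.
split; first by move=> x hx; exact (S_inH hS (Qlim_S hx)).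
split; first by move=> a x y hx hy; exact (Qlim_lin a hx hy).
exists (Num.sqrt (2 * M0 ^+ 2)) => x hx.
have hM2 : 0 <= 2 * M0 ^+ 2 by rewrite mulr_ge0 ?sqr_ge0.
apply: hnorm_le_of_sqnorm (sqrtr_ge0 _) (inH_l2 hx) _.
by rewrite sqr_sqrtr //; exact: Qlim_bound.
Qed.

Lemma Qlim_range z : S z <-> exists x, inH N x /\ z = Qlim x.
Proof.
split; first by move=> hz; exists z; split; [exact (S_inH hS hz) | rewrite Qlim_fix].
by case=> x [hx ->]; exact: Qlim_S.
Qed.

Lemma Qlim_diagP_sym x y : inH N x -> inH N y ->
  ip (diagP q (Qlim x)) y = ip (diagP q x) (Qlim y).
Proof.
move=> hx hy; have hiy := inH_lin 'i%C hy (S_inH hS (S_zeros hS)); rewrite lin_mulI in hiy.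
by rewrite diagP_diagR !ip_diagR -Qlim_mulI // !Qlim_sym.
Qed.

End Approximation.

Arguments Qlim {R} S q x.

Theorem lemma4p5 (R : realType) (N : option nat) (S : set (nat -> R[i])) :
  closed_subspace N S ->
  (exists M : R, forall d : nat -> R, Dplus N d ->
     forall P, is_PAS N (diagR d) S P -> opnorm_le N P M) ->
  forall q : nat -> bool, compatible N (diagP q) S.
Proof.
move=> hS [M0 hM] q; exists (Qlim S q).
split; first exact (Qlim_bounded_op hS hM).
split; first by move=> x hx; exact (Qlim_fix hS hM (Qlim_S hS hM hx)).
split; first by move=> z; exact (Qlim_range hS hM z).
by move=> x y hx hy; exact (Qlim_diagP_sym hS hM x y hx hy).
Qed.
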